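(* Let $k$ be an algebraically closed field of characteristic $0$, $d\ge3$, and let $(V,\Theta)$ be a regular indecomposable $d$-linear space over $k$ with maximal center. Let $\mathbf{G}$ be the group of $k$-algebra automorphisms of $\mathrm{Cent}_k(\Theta)$ and $\chi:\mathcal{O}(\Theta)\to\mathbf{G}$, $\chi(\sigma)(f)=\sigma f\sigma^{-1}$. Let $\mu_d=\{\zeta\in k:\zeta^d=1\}$, identified with $\{\zeta\,\mathrm{id}_V\}\subseteq\mathcal{O}(\Theta)$. Then the sequence $1\to\mu_d\to\mathcal{O}(\Theta)\xrightarrow{\chi}\mathbf{G}$ is exact, i.e. $\ker\chi=\mu_d$.
   Context: A $d$-linear space is $(V,\Theta)$ with $V$ finite-dimensional over $k$ and $\Theta:V^d\to k$ symmetric $d$-linear. It is regular if $\Theta(w,u_2,\dots,u_d)=0$ for all $u_i$ implies $w=0$. Orthogonal sum: $(V_1\oplus V_2,\Theta_1\perp\Theta_2)$ with $(\Theta_1\perp\Theta_2)(v_1+u_1,\dots,v_d+u_d)=\Theta_1(v_1,\dots,v_d)+\Theta_2(u_1,\dots,u_d)$; the space is indecomposable if not isomorphic to an orthogonal sum of two (nonzero) $d$-linear spaces. Center: $\mathrm{Cent}_k(\Theta)=\{f\in\mathrm{End}_k(V):\Theta(f u_1,u_2,\dots,u_d)=\Theta(u_1,fu_2,\dots,u_d)\ \forall u_i\}$; the space has maximal center if $\mathrm{Cent}_k(\Theta)$ is a maximal commutative subalgebra of $\mathrm{End}_k(V)$. $\mathcal{O}(\Theta)=\{\sigma\in GL_k(V):\Theta(\sigma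 u_1,\dots,\sigma u_d)=\Theta(u_1,\dots,u_d)\ \forall u_i\}$. *)

(* V = 'rV[k]_n (row vectors); an endomorphism f of V is a
   matrix F acting by v |-> v *m F.  A d-tuple of vectors is a finfun. *)
From HB Require Import structures.
From mathcomp Require Import all_boot all_order all_algebra all_fingroup.
Set Implicit Arguments. Unset Strict Implicit. Unset Printing Implicit Defensive.
Import GRing.Theory.
Local Open Scope ring_scope.

Section DLinear.
Variable k : fieldType.

Definition upd d n (u : {ffun 'I_d -> 'rV[k]_n}) (i : 'I_d) (v : 'rV[k]_n) :
  {ffun 'I_d -> 'rV[k]_n} := [ffun j => if j == i then v else u j].

Definition multilinear d n (Th : {ffun 'I_d -> 'rV[k]_n} -> k) : Prop :=
  forall u i (a : k) v w,
    Th (upd u i (a *: v + w)) = a * Th (upd u i v) + Th (upd u i w).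

Definition symmetric_form d n (Th : {ffun 'I_d -> 'rV[k]_n} -> k) : Prop :=
  forall (s : 'S_d) (u : {ffun 'I_d -> 'rV[k]_n}), Th [ffun j => u (s j)] = Th u.

Definition dlinear d n (Th : {ffun 'I_d -> 'rV[k]_n} -> k) : Prop :=
  multilinear Th /\ symmetric_form Th.

Definition regular d n (Th : {ffun 'I_d -> 'rV[k]_n} -> k) : Prop :=
  forall w : 'rV[k]_n,
    (forall u (i : 'I_d), val i = 0%N -> Th (upd u i w) = 0) -> w = 0.

Definition orth_sum d n1 n2 (Th1 : {ffun 'I_d -> 'rV[k]_n1} -> k)
  (Th2 : {ffun 'I_d -> 'rV[k]_n2} -> k) (x : {ffun 'I_d -> 'rV[k]_(n1 + n2)}) : k :=
  Th1 [ffun i => lsubmx (x i)] + Th2 [ffun i => rsubmx (x i)].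

Definition dlin_iso d n m (Th : {ffun 'I_d -> 'rV[k]_n} -> k)
  (Th' : {ffun 'I_d -> 'rV[k]_m} -> k) (P : 'M[k]_(n, m)) : Prop :=
  [/\ row_free P, row_full P &
      forall u : {ffun 'I_d -> 'rV[k]_n}, Th' [ffun i => u i *m P] = Th u].

Definition indecomposable d n (Th : {ffun 'I_d -> 'rV[k]_n} -> k) : Prop :=
  ~ exists n1 n2 (Th1 : {ffun 'I_d -> 'rV[k]_n1} -> k)
          (Th2 : {ffun 'I_d -> 'rV[k]_n2} -> k) (P : 'M[k]_(n, n1 + n2)),
      [/\ (0 < n1)%N, (0 < n2)%N, dlinear Th1, dlinear Th2 &
          dlin_iso Th (orth_sum Th1 Th2) P].

Definition Cent d n (Th : {ffun 'I_d -> 'rV[k]_n} -> k) (F : 'M[k]_n) : Prop :=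
  forall u (i j : 'I_d), val i = 0%N -> val j = 1%N ->
    Th (upd u i (u i *m F)) = Th (upd u j (u j *m F)).

Definition subalgebra n (A : 'M[k]_n -> Prop) : Prop :=
  [/\ A 1%:M, (forall F G, A F -> A G -> A (F + G)),
      (forall (a : k) F, A F -> A (a *: F)) &
      (forall F G, A F -> A G -> A (F *m G))].

Definition commutative_set n (A : 'M[k]_n -> Prop) : Prop :=
  forall F G, A F -> A G -> F *m G = G *m F.

Definition maximal_commutative_subalgebra n (A : 'M[k]_n -> Prop) : Prop :=
  [/\ subalgebra A, commutative_set A &
      forall B : 'M[k]_n -> Prop, subalgebra B -> commutative_set B ->
        (forall F, A F -> B F) -> forall F, B F -> A F].

Definition maximal_center d n (Th : {ffun 'I_d -> 'rV[k]_n} -> k) : Prop :=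
  maximal_commutative_subalgebra (Cent Th).

Definition orthO d n (Th : {ffun 'I_d -> 'rV[k]_n} -> k) (S : 'M[k]_n) : Prop :=
  S \in unitmx /\ forall u : {ffun 'I_d -> 'rV[k]_n}, Th [ffun i => u i *m S] = Th u.

(* chi(sigma)(f) = sigma o f o sigma^{-1}; with the row-vector convention
   v |-> v *m F, the composite sigma o f o sigma^{-1} has matrix
   invmx S *m F *m S. *)
Definition chi n (S : 'M[k]_n) (F : 'M[k]_n) : 'M[k]_n := invmx S *m F *m S.

End DLinear.

(* An element of ker chi commutes with the maximal commutative algebra Cent(Th),
   hence lies in it.  For F in Cent(Th), symmetry moves the d factors of F in
   Th(F u_1, ..., F u_d) into a single slot, giving Th(F^d u_1, u_2, ..., u_d);
   so by regularity F is in O(Th) iff F^d = 1.  In characteristic 0 the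
   polynomial X^d - 1 has simple roots, so a non-scalar S with S^d = 1 has a
   polynomial E in S that is an idempotent other than 0 and 1.  Then E and
   1 - E are central again, and Th is the orthogonal sum of its restrictions to
   the images of E and 1 - E, contradicting indecomposability. *)

From Pilot Require Import Defs.
From mathcomp Require Import all_boot all_order all_algebra all_fingroup.
Set Implicit Arguments. Unset Strict Implicit. Unset Printing Implicit Defensive.
Import GRing.Theory.
Local Open Scope ring_scope.

Section TupleUpdate.
Variables (k : fieldType) (d n : nat).
Implicit Types (A : {set 'I_d}) (u : {ffun 'I_d -> 'rV[k]_n}) (F : 'M[k]_n).

Definition mul_on (A : {set 'I_d}) F u : {ffun 'I_d -> 'rV[k]_n} :=
  [ffun j => if j \in A then u j *m F else u j].

Lemma upd_id u i : upd u i (u i) = u.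
Proof. by apply/ffunP=> j; rewrite ffunE; case: eqP => // ->. Qed.

Lemma upd_upd u i x y : upd (upd u i x) i y = upd u i y.
Proof. by apply/ffunP=> j; rewrite !ffunE; case: eqP. Qed.

Lemma upd_at u i x : upd u i x i = x.
Proof. by rewrite ffunE eqxx. Qed.

Lemma mul_on1 F u i : mul_on [set i] F u = upd u i (u i *m F).
Proof. by apply/ffunP=> j; rewrite !ffunE in_set1; case: eqP => // ->. Qed.

Lemma mul_onD1 A F u j : j \in A ->
  mul_on A F u = upd (mul_on (A :\ j) F u) j (u j *m F).
Proof.
by move=> jA; apply/ffunP=> m; rewrite !ffunE in_setD1; case: eqP => [->|]; rewrite ?jA.
Qed.

Lemma upd_mul_on A F u i : i \in A ->
  upd (mul_on A F u) i (u i *m F *m F) = mul_on A F (upd u i (u i *m F)).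
Proof.
by move=> iA; apply/ffunP=> m; rewrite !ffunE; case: eqP => // ->; rewrite iA.
Qed.

End TupleUpdate.

Section Multilinear.
Variables (k : fieldType) (d n : nat) (Th : {ffun 'I_d -> 'rV[k]_n} -> k).
Hypothesis Th_ml : multilinear Th.

Lemma multilinear_updD u i v w :
  Th (upd u i (v + w)) = Th (upd u i v) + Th (upd u i w).
Proof. by have := Th_ml u i 1 v w; rewrite scale1r mul1r. Qed.

Lemma multilinear_updB u i v w :
  Th (upd u i (v - w)) = Th (upd u i v) - Th (upd u i w).
Proof. by rewrite addrC -scaleN1r Th_ml mulN1r addrC. Qed.

Lemma regular_slot_invariant (G : 'M[k]_n) : regular Th ->
  (forall u (i : 'I_d), val i = 0%N -> Th (upd u i (u i *m G)) = Th u) ->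
  G = 1%:M.
Proof.
move=> Th_reg G_inv; apply/eqP; rewrite -subr_eq0; apply/eqP/row_matrixP=> r.
rewrite row0 rowE; apply: Th_reg => u i i0.
have := G_inv (upd u i (delta_mx 0 r)) i i0; rewrite upd_upd upd_at => G_fix.
by rewrite mulmxBr mulmx1 multilinear_updB G_fix subrr.
Qed.

End Multilinear.

Lemma dlinear_mulmx (k : fieldType) d n m (Th : {ffun 'I_d -> 'rV[k]_n} -> k)
    (M : 'M[k]_(m, n)) :
  dlinear Th -> dlinear (fun x : {ffun 'I_d -> 'rV[k]_m} => Th [ffun i => x i *m M]).
Proof.
case=> Th_ml Th_sym; split=> [u i a v w | s u].
  have updM y : [ffun j => upd u i y j *m M] = upd [ffun j => u j *m M] i (y *m M).
    by apply/ffunP=> j; rewrite !ffunE; case: eqP.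
  by rewrite !updM mulmxDl -scalemxAl Th_ml.
by rewrite -[RHS](Th_sym s); congr Th; apply/ffunP=> j; rewrite !ffunE.
Qed.

Section SymmetricForm.
Variables (k : fieldType) (d n : nat) (Th : {ffun 'I_d -> 'rV[k]_n} -> k).
Hypothesis Th_sym : Defs.symmetric_form Th.

Lemma symmetric_upd (s : 'S_d) u i x :
  Th (upd u (s i) x) = Th (upd [ffun m => u (s m)] i x).
Proof.
by rewrite -[LHS](Th_sym s); congr Th; apply/ffunP=> m; rewrite !ffunE (inj_eq perm_inj).
Qed.

Lemma Cent_upd_swap F : Cent Th F -> forall u (i j : 'I_d), i != j ->
  Th (upd u i (u i *m F)) = Th (upd u j (u j *m F)).
Proof.
move=> F_Cent u i j ij.
have d_gt1 : (1 < d)%N.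
  have [i0 | i_gt0] := posnP i; last exact: leq_ltn_trans i_gt0 (ltn_ord i).
  apply: leq_ltn_trans (ltn_ord j); rewrite lt0n.
  by apply: contra ij => /eqP j0; apply/eqP/val_inj; rewrite /= i0 j0.
pose i0 : 'I_d := Ordinal (ltnW d_gt1); pose i1 : 'I_d := Ordinal d_gt1.
(* [s] sends the slots 0 and 1 named in [Cent] to [i] and [j]. *)
pose a := tperm i0 i i1; pose s := (tperm i0 i * tperm a j)%g.
have ai : a != i by rewrite -[i in _ != i](tpermL i0 i) (inj_eq perm_inj).
have s0 : s i0 = i by rewrite permM tpermL tpermD // eq_sym.
have s1 : s i1 = j by rewrite permM tpermL.
pose v := [ffun m => u (s m)].
have upd_s m : Th (upd u (s m) (u (s m) *m F)) = Th (upd v m (v m *m F)).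
  by rewrite symmetric_upd ffunE.
by rewrite -s0 -s1 !upd_s; apply: F_Cent.
Qed.

End SymmetricForm.

Section CentralizerPowers.
Variables (k : fieldType) (d n : nat) (Th : {ffun 'I_d -> 'rV[k]_n.+1} -> k).
Hypothesis Th_sym : Defs.symmetric_form Th.
Variable F : 'M[k]_n.+1.
Hypothesis F_Cent : Cent Th F.

Lemma Cent_mul_on (A : {set 'I_d}) u i : i \in A ->
  Th (mul_on A F u) = Th (upd u i (u i *m F ^+ #|A|)).
Proof.
move mA: #|A| => m; elim: m A mA u i => [|m IH] A mA u i iA.
  by move: mA; rewrite (cardD1 i) iA.
have [Ai0 | [j /setD1P [ji jA]]] := set_0Vmem (A :\ i).
  have A1 : A = [set i] by rewrite -(setD1K iA) Ai0 setU0.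
  by move: mA; rewrite A1 cards1 => -[<-]; rewrite mul_on1 expr1.
have iAj : i \in A :\ j by rewrite in_setD1 eq_sym ji.
rewrite (mul_onD1 _ _ jA) -[u j](_ : mul_on (A :\ j) F u j = u j); last first.
  by rewrite ffunE in_setD1 eqxx.
rewrite (Cent_upd_swap Th_sym F_Cent _ ji) ffunE iAj upd_mul_on //.
rewrite (IH (A :\ j) _ _ i) //; last by move: mA; rewrite (cardsD1 j) jA add1n => -[].
by rewrite upd_upd upd_at -mulmxA mulmxE -exprS.
Qed.

Lemma Cent_mulE (u : {ffun 'I_d -> 'rV[k]_n.+1}) i :
  Th [ffun j => u j *m F] = Th (upd u i (u i *m F ^+ d)).
Proof.
have := Cent_mul_on u (in_setT i); rewrite cardsT card_ord => <-.
by congr Th; apply/ffunP=> j; rewrite !ffunE in_setT.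
Qed.

End CentralizerPowers.

Section Commutant.
Variables (k : fieldType) (n : nat).
Implicit Types X : 'M[k]_n -> Prop.

Definition commutant X (G : 'M[k]_n) : Prop := forall H, X H -> G *m H = H *m G.

Lemma commutant_subalgebra X : subalgebra (commutant X).
Proof.
split=> [H _ | F G hF hG H xH | a F hF H xH | F G hF hG H xH].
- by rewrite mul1mx mulmx1.
- by rewrite mulmxDl mulmxDr hF // hG.
- by rewrite -scalemxAl -scalemxAr hF.
- by rewrite -mulmxA hG // !mulmxA hF.
Qed.

Lemma sub_commutant2 X G : X G -> commutant (commutant X) G.
Proof. by move=> xG H /(_ G xG). Qed.

Lemma commutant2_commutative X :
  commutative_set X -> commutative_set (commutant (commutant X)).
Proof.
move=> X_comm G H G2 H2; apply: G2 => x xX.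
by apply: H2 => y yX; apply: X_comm.
Qed.

Lemma maximal_commutant A :
  maximal_commutative_subalgebra A -> forall F, commutant A F -> A F.
Proof.
move=> [_ A_comm A_max] F F_comm.
(* The double commutant of [A] and [F] is a commutative subalgebra containing [A]. *)
pose X G := A G \/ G = F.
have X_comm : commutative_set X.
  by move=> G H [xG|->] [xH|->] //; [apply: A_comm | rewrite F_comm | rewrite F_comm].
apply: (A_max _ (commutant_subalgebra _) (commutant2_commutative X_comm)).
- by move=> G aG; apply: sub_commutant2; left.
- by apply: sub_commutant2; right.
Qed.

End Commutant.

Lemma chi_fixE (k : fieldType) n (S F : 'M[k]_n) :
  S \in unitmx -> chi S F = F <-> S *m F = F *m S.
Proof.
move=> S_unit; rewrite /chi; split=> [FS | SF].
  by rewrite -[in LHS]FS !mulmxA mulmxV ?mul1mx.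
by rewrite -mulmxA -SF mulmxA mulVmx ?mul1mx.
Qed.

Lemma submx_idem (k : fieldType) m n (X : 'M[k]_(m, n)) (E : 'M[k]_n) :
  E *m E = E -> (X <= E)%MS -> X *m E = X.
Proof. by move=> E_idem /submxP [D ->]; rewrite -mulmxA E_idem. Qed.

Section IdempotentSplit.
Variables (k : fieldType) (n : nat) (E : 'M[k]_n).

(* Coordinates in row bases of the images of [E] and [1 - E]; for an idempotent
   [E] this is the isomorphism [V = im E (+) im (1 - E)]. *)
Definition idem_split : 'M[k]_(n, \rank E + \rank (1%:M - E)) :=
  row_mx (E *m pinvmx (row_base E))
         ((1%:M - E) *m pinvmx (row_base (1%:M - E))).

Lemma idem_splitKl (u : 'rV[k]_n) :
  lsubmx (u *m idem_split) *m row_base E = u *m E.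
Proof. by rewrite mul_mx_row row_mxKl -mulmxA mulmxKpV // eq_row_base. Qed.

Lemma idem_splitKr (u : 'rV[k]_n) :
  rsubmx (u *m idem_split) *m row_base (1%:M - E) = u *m (1%:M - E).
Proof. by rewrite mul_mx_row row_mxKr -mulmxA mulmxKpV // eq_row_base. Qed.

Lemma idem_split_row_free : row_free idem_split.
Proof.
apply/row_freeP; exists (col_mx (row_base E) (row_base (1%:M - E))).
by rewrite mul_row_col !mulmxKpV ?eq_row_base // addrC subrK.
Qed.

Lemma idem_split_row_full : E *m E = E -> row_full idem_split.
Proof.
move=> E_idem; set E' := 1%:M - E; set B1 := row_base E; set B2 := row_base E'.
have E'_idem : E' *m E' = E' by rewrite mulmxBl mul1mx mulmxBr mulmx1 E_idem subrr subr0.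
have B1E : B1 *m E = B1 by rewrite submx_idem // eq_row_base.
have B2E' : B2 *m E' = B2 by rewrite submx_idem // eq_row_base.
have B1E' : B1 *m E' = 0 by rewrite mulmxBr mulmx1 B1E subrr.
have B2E : B2 *m E = 0 by rewrite -B2E' -mulmxA mulmxBl mul1mx E_idem subrr mulmx0.
apply/row_fullP; exists (col_mx B1 B2).
rewrite mul_col_row !(mulmxA B1) !(mulmxA B2) B1E B1E' B2E B2E' !mul0mx.
by rewrite !mulmxVp ?row_base_free // -scalar_mx_block.
Qed.

End IdempotentSplit.

Lemma idem_expn (R : pzSemiRingType) (e : R) m : e * e = e -> (0 < m)%N -> e ^+ m = e.
Proof. by move=> e_idem; case: m => // m _; elim: m => // m IH; rewrite exprS IH. Qed.

Section IdempotentDecomposition.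
Variables (k : fieldType) (d n : nat) (Th : {ffun 'I_d -> 'rV[k]_n.+1} -> k).
Hypotheses (Th_dlin : dlinear Th) (d_gt0 : (0 < d)%N).
Variable E : 'M[k]_n.+1.
Hypotheses (E_idem : E *m E = E) (E_Cent : Cent Th E) (E'_Cent : Cent Th (1%:M - E)).

Lemma Cent_idempotent_split u :
  Th u = Th [ffun j => u j *m E] + Th [ffun j => u j *m (1%:M - E)].
Proof.
have [Th_ml Th_sym] := Th_dlin; pose i := Ordinal d_gt0.
have idem_pow (G : 'M[k]_n.+1) : G *m G = G -> G ^+ d = G.
  by move=> G_idem; rewrite idem_expn -?mulmxE.
have E'_idem : (1%:M - E) *m (1%:M - E) = 1%:M - E.
  by rewrite mulmxBl mul1mx mulmxBr mulmx1 E_idem subrr subr0.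
rewrite (Cent_mulE Th_sym E_Cent _ i) (Cent_mulE Th_sym E'_Cent _ i) !idem_pow //.
by rewrite -(multilinear_updD Th_ml) -mulmxDr addrC subrK mulmx1 upd_id.
Qed.

Lemma Cent_idempotent_decomposable : E != 0 -> E != 1%:M -> ~ indecomposable Th.
Proof.
move=> E_neq0 E_neq1; apply.
exists (\rank E), (\rank (1%:M - E)),
  (fun x => Th [ffun j => x j *m row_base E]),
  (fun x => Th [ffun j => x j *m row_base (1%:M - E)]), (idem_split E).
split; [by rewrite lt0n mxrank_eq0 | by rewrite lt0n mxrank_eq0 subr_eq0 eq_sym
       | exact: dlinear_mulmx | exact: dlinear_mulmx | split].
- exact: idem_split_row_free.
- exact: idem_split_row_full.
move=> u; rewrite /orth_sum [RHS]Cent_idempotent_split.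
by congr (Th _ + Th _); apply/ffunP=> j; rewrite !ffunE ?idem_splitKl ?idem_splitKr.
Qed.

End IdempotentDecomposition.

Lemma simple_root_factor (k : fieldType) (q : {poly k}) l :
  root q l -> q^`().[l] != 0 ->
  exists2 p, q = q^`().[l] *: (p * ('X - l%:P)) & p.[l] = 1.
Proof.
move=> /factor_theorem [r ->]; rewrite derivM derivXsubC !hornerE subrr mulr0 add0r.
move=> rl_neq0; exists (r.[l]^-1 *: r); last by rewrite hornerZ mulVf.
by rewrite -scalerAl scalerA divff // scale1r.
Qed.

Lemma Xn_sub1_simple_root (k : fieldType) d (l : k) :
  [pchar k] =i pred0 -> (0 < d)%N -> root ('X^d - 1) l -> ('X^d - 1)^`().[l] != 0.
Proof.
move=> char0 d_gt0; rewrite rootE !hornerE subr_eq0 => /eqP ld.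
have l_neq0 : l != 0.
  apply/eqP=> l0; move: ld; rewrite l0 expr0n eqn0Ngt d_gt0 => /esym/eqP.
  by rewrite oner_eq0.
rewrite derivB derivXn derivC subr0 hornerMn hornerXn -mulr_natr mulf_neq0 ?expf_neq0 //.
by rewrite ((pcharf0P k).1 char0) -lt0n.
Qed.

Section IdempotentPolynomial.
Variables (k : fieldType) (n : nat) (S : 'M[k]_n.+1).

Lemma eigenvector_horner_mx (v : 'rV[k]_n.+1) l p :
  v *m S = l *: v -> v *m horner_mx S p = p.[l] *: v.
Proof.
move=> Sv; elim/poly_ind: p => [|p c IH]; first by rewrite rmorph0 mulmx0 horner0 scale0r.
rewrite rmorphD rmorphM /= horner_mx_X horner_mx_C hornerMXaddC mulmxDr -mulmxE.
by rewrite mulmxA IH -scalemxAl Sv scalerA mul_mx_scalar scalerDl.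
Qed.

Lemma simple_root_idempotent p l :
  horner_mx S (p * ('X - l%:P)) = 0 -> p.[l] = 1 -> eigenvalue S l ->
  ~~ is_scalar_mx S ->
  let E := horner_mx S p in [/\ E *m E = E, E != 0 & E != 1%:M].
Proof.
move=> Sq pl /eigenvalueP [v Sv v_neq0] S_nscal E.
have [t pt] : exists t, p - 1 = t * ('X - l%:P).
  by apply/factor_theorem; rewrite rootE !hornerE pl subrr.
split.
- (* [p - 1] vanishes at [l], so [p (p - 1)] is a multiple of [p (X - l)]. *)
  apply/eqP; rewrite -subr_eq0 mulmxE -[X in _ - X]mulr1 -mulrBr.
  rewrite -(rmorph1 (horner_mx S)) -rmorphB /= pt -rmorphM /=.
  by rewrite mulrCA rmorphM /= Sq mulr0.
- apply: contra_neq v_neq0 => E0.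
  by rewrite -[v]scale1r -pl -(eigenvector_horner_mx _ Sv) -/E E0 mulmx0.
- apply: contraNneq S_nscal => E1; apply/is_scalar_mxP; exists l; apply/eqP.
  move: Sq; rewrite rmorphM /= -/E E1 mul1r rmorphB /= horner_mx_X horner_mx_C.
  by move/eqP; rewrite subr_eq0.
Qed.

End IdempotentPolynomial.

Lemma separable_annihilator_idempotent (k : closedFieldType) n (S : 'M[k]_n.+1) q :
  horner_mx S q = 0 -> (forall l, root q l -> q^`().[l] != 0) ->
  ~~ is_scalar_mx S ->
  exists p, let E := horner_mx S p in [/\ E *m E = E, E != 0 & E != 1%:M].
Proof.
move=> Sq q_simple S_nscal.
have [l] : exists l, root (char_poly S) l by apply/closed_rootP; rewrite size_char_poly.
rewrite -eigenvalue_root_char => S_l; have [v Sv v_neq0] := eigenvalueP S_l.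
have ql : root q l.
  have := eigenvector_horner_mx q Sv; rewrite Sq mulmx0 => /esym/eqP.
  by rewrite scaler_eq0 (negbTE v_neq0) orbF.
have [p qE pl] := simple_root_factor ql (q_simple l ql).
exists p; apply: simple_root_idempotent pl S_l S_nscal.
by apply: (scalerI (q_simple l ql)); rewrite -linearZ /= -qE Sq scaler0.
Qed.

Section Center.
Variables (k : fieldType) (d n : nat) (Th : {ffun 'I_d -> 'rV[k]_n.+1} -> k).
Hypothesis Th_max : maximal_center Th.

Lemma Cent_horner_mx S p : Cent Th S -> Cent Th (horner_mx S p).
Proof.
move=> S_Cent; apply: (maximal_commutant Th_max) => G G_Cent.
have [_ Cent_comm _] := Th_max.
by apply: comm_horner_mx; rewrite /comm_mx Cent_comm.
Qed.

End Center.

Lemma Cent_orthOE (k : fieldType) d n (Th : {ffun 'I_d -> 'rV[k]_n.+1} -> k) F :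
  dlinear Th -> regular Th -> (0 < d)%N -> Cent Th F ->
  orthO Th F <-> F ^+ d = 1.
Proof.
move=> [Th_ml Th_sym] Th_reg d_gt0 F_Cent; split=> [[_ F_orth] | Fd].
  apply: (regular_slot_invariant Th_ml Th_reg) => u i _.
  by rewrite -(Cent_mulE Th_sym F_Cent) F_orth.
split=> [|u]; first by rewrite -(unitrX_pos _ d_gt0) Fd unitr1.
by rewrite (Cent_mulE Th_sym F_Cent _ (Ordinal d_gt0)) Fd mulmx1 upd_id.
Qed.

Lemma scalar_root_unity_ker_chi (k : fieldType) d n
    (Th : {ffun 'I_d -> 'rV[k]_n.+1} -> k) (z : k) :
  dlinear Th -> regular Th -> (0 < d)%N -> maximal_center Th -> z ^+ d = 1 ->
  orthO Th z%:M /\ (forall F, Cent Th F -> chi z%:M F = F).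
Proof.
move=> Th_dlin Th_reg d_gt0 [[Cent1 _ Cent_scale _] _ _] zd.
have z_Cent : Cent Th z%:M by rewrite -scalemx1; exact: (Cent_scale z _ Cent1).
have z_orth : orthO Th z%:M.
  by apply/(Cent_orthOE Th_dlin Th_reg d_gt0 z_Cent); rewrite -rmorphXn zd.
by split=> // F _; apply/chi_fixE; [case: z_orth | rewrite scalar_mxC].
Qed.

Lemma nonscalar_Cent_root_unity_decomposable (k : closedFieldType) d n
    (Th : {ffun 'I_d -> 'rV[k]_n.+1} -> k) (S : 'M[k]_n.+1) :
  [pchar k] =i pred0 -> (0 < d)%N -> dlinear Th -> maximal_center Th ->
  Cent Th S -> S ^+ d = 1 -> ~~ is_scalar_mx S -> ~ indecomposable Th.
Proof.
move=> char0 d_gt0 Th_dlin Th_max S_Cent Sd S_nscal.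
have Sq : horner_mx S ('X^d - 1) = 0.
  by rewrite rmorphB rmorphXn rmorph1 /= horner_mx_X Sd subrr.
have [p [E_idem E_neq0 E_neq1]] :=
  separable_annihilator_idempotent Sq (fun l => Xn_sub1_simple_root char0 d_gt0) S_nscal.
have E'_Cent : Cent Th (1%:M - horner_mx S p).
  by have := Cent_horner_mx Th_max (1 - p) S_Cent; rewrite rmorphB rmorph1.
have E_Cent := Cent_horner_mx Th_max p S_Cent.
exact: (Cent_idempotent_decomposable Th_dlin d_gt0 E_idem E_Cent E'_Cent E_neq0 E_neq1).
Qed.

Lemma ker_chi_dim0 (k : fieldType) d (Th : {ffun 'I_d -> 'rV[k]_0} -> k) (S : 'M[k]_0) :
  (orthO Th S /\ (forall F, Cent Th F -> chi S F = F)) <->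
  (exists zeta : k, zeta ^+ d = 1 /\ S = zeta%:M).
Proof.
split=> [_ | _]; first by exists 1; split; [exact: expr1n | apply/matrixP=> -[]].
split=> [|F _]; last by apply/matrixP=> -[].
split=> [|u]; first by rewrite unitmxE det_mx00 unitr1.
by congr Th; apply/ffunP=> i; rewrite ffunE; apply/rowP=> -[].
Qed.

Theorem theorem4p2 (k : closedFieldType) (d n : nat)
  (Th : {ffun 'I_d -> 'rV[k]_n} -> k) :
  [pchar k] =i pred0 -> (3 <= d)%N ->
  dlinear Th -> regular Th -> indecomposable Th -> maximal_center Th ->
  forall S : 'M[k]_n,
    (orthO Th S /\ (forall F, Cent Th F -> chi S F = F)) <->
    (exists zeta : k, zeta ^+ d = 1 /\ S = zeta%:M).
Proof.
move=> char0 d_ge3; have d_gt0 : (0 < d)%N by apply: leq_trans d_ge3.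
case: n Th => [|n] Th Th_dlin Th_reg Th_indec Th_max S; first exact: ker_chi_dim0.
split=> [[S_orth S_chi] | [z [zd ->]]]; last exact: scalar_root_unity_ker_chi.
have S_Cent : Cent Th S.
  apply: (maximal_commutant Th_max) => G /S_chi.
  by case: S_orth => S_unit _ /(chi_fixE _ S_unit).
have Sd : S ^+ d = 1 by apply/(Cent_orthOE Th_dlin Th_reg d_gt0 S_Cent).
have [/is_scalar_mxP [z Sz] | S_nscal] := boolP (is_scalar_mx S).
  by exists z; split=> //; move/matrixP/(_ 0 0): Sd; rewrite Sz -rmorphXn !mxE.
by case: (nonscalar_Cent_root_unity_decomposable char0 d_gt0 Th_dlin Th_max
  S_Cent Sd S_nscal).
Qed.
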